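(* Let $\mu$ be a nonatomic positive Radon measure on $\mathbb{R}$ and let $g\in\Lambda_\mu$ with seminorm $M$. For $a<b$ let $g_{ab}(x)=\frac{b-x}{b-a}g(a)+\frac{x-a}{b-a}g(b)$. Then $\sup_{x\in[a,b]}|g(x)-g_{ab}(x)|\le M\mu([a,b])$ for all $a<b$. Conversely, if a continuous $g$ satisfies $\sup_{[a,b]}|g-g_{ab}|\le M\mu([a,b])$ for all $a<b$, then $g\in\Lambda_\mu$ with seminorm at most $2M$.
   Context: For a nonatomic positive Radon measure $\mu$ on $\mathbb{R}$, $\Lambda_\mu$ is the class of continuous $g\colon\mathbb{R}\to\mathbb{R}$ for which there is $M>0$ with $|g(x+h)-2g(x)+g(x-h)|\le M\mu([x-h,x+h])$ for all $x\in\mathbb{R}$, $h\ge0$; the smallest such $M$ is the seminorm of $g$ in $\Lambda_\mu$. *)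

From Stdlib Require Import Reals.
Open Scope R_scope.

Definition Icc (a b : R) : R -> Prop := fun y => a <= y <= b.

(* A positive Radon (= locally finite Borel) measure on R, presented by a
   sigma-algebra [meas] containing all closed intervals (hence all Borel
   sets) and a set function [mu].  Since a Radon measure on R may be
   infinite on unbounded sets, [mu] is only constrained on bounded
   measurable sets (which determine the measure); its values elsewhere are
   irrelevant. *)
Definition bounded_set (A : R -> Prop) : Prop :=
  exists c, forall y, A y -> Rabs y <= c.

Record radon_measure := {
  meas : (R -> Prop) -> Prop;
  mu : (R -> Prop) -> R;
  meas_Icc : forall a b, meas (Icc a b);
  meas_compl : forall A, meas A -> meas (fun y => ~ A y);
  meas_cunion : forall A : nat -> R -> Prop,
      (forall n, meas (A n)) -> meas (fun y => exists n, A n y);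
  mu_nonneg : forall A, meas A -> bounded_set A -> 0 <= mu A;
  mu_sigma_additive : forall A : nat -> R -> Prop,
      (forall n, meas (A n)) ->
      (forall n m y, n <> m -> A n y -> A m y -> False) ->
      bounded_set (fun y => exists n, A n y) ->
      infinite_sum (fun n => mu (A n)) (mu (fun y => exists n, A n y))
}.

Definition nonatomic (m : radon_measure) : Prop :=
  forall x, mu m (fun y => y = x) = 0.

Definition Lambda_bound (m : radon_measure) (g : R -> R) (M : R) : Prop :=
  forall x h, 0 <= h ->
    Rabs (g (x + h) - 2 * g x + g (x - h)) <= M * mu m (Icc (x - h) (x + h)).

Definition in_Lambda (m : radon_measure) (g : R -> R) : Prop :=
  continuity g /\ exists M, 0 < M /\ Lambda_bound m g M.

Definition is_seminorm (m : radon_measure) (g : R -> R) (S : R) : Prop :=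
  (forall M, 0 < M -> Lambda_bound m g M -> S <= M) /\
  (forall s, (forall M, 0 < M -> Lambda_bound m g M -> s <= M) -> s <= S).

Definition g_ab (g : R -> R) (a b x : R) : R :=
  (b - x) / (b - a) * g a + (x - a) / (b - a) * g b.

From Stdlib Require Import Reals Lra Lia FunctionalExtensionality PropExtensionality Classical.
Open Scope R_scope.

(* Direct part: the error h = g - g_ab vanishes at a and b and has the same
   second differences as g, since g_ab is affine.  At an interior maximum x0
   of h on [a,b], the symmetric window around x0 reaching the nearer endpoint
   gives  h(x0) <= |h(x0+t) - 2h(x0) + h(x0-t)| <= M' mu([x0-t,x0+t])
   <= M' mu([a,b])  (a discrete maximum principle); the same for -h bounds
   |h|.  This holds for every admissible constant M', hence for their
   infimum, the seminorm.
   Converse: g(x+t) - 2g(x) + g(x-t) = -2 (g - g_{x-t,x+t})(x), so g satisfies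
   the Lambda_mu bound with constant 2M, and the seminorm is at most 2M.

   Neither
   direction uses that mu is nonatomic. *)

Lemma set_ext (A B : R -> Prop) : (forall y, A y <-> B y) -> A = B.
Proof.
  intros H; apply functional_extensionality; intro y.
  apply propositional_extensionality; auto.
Qed.

Lemma sum_f_R0_const (e : R) (n : nat) : sum_f_R0 (fun _ => e) n = INR (S n) * e.
Proof.
  induction n as [|n IH]; simpl sum_f_R0.
  - simpl; ring.
  - rewrite IH, (S_INR (S n)); ring.
Qed.

Lemma infinite_sum_const_self (e : R) : infinite_sum (fun _ => e) e -> e = 0.
Proof.
  intros H. destruct (Req_dec e 0) as [|He]; auto.
  assert (Pe : 0 < Rabs e) by (apply Rabs_pos_lt; auto).
  destruct (H (Rabs e) Pe) as [N HN].
  specialize (HN (S N) (le_S _ _ (le_n N))). unfold R_dist in HN.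
  rewrite sum_f_R0_const in HN.
  replace (INR (S (S N)) * e - e) with (INR (S N) * e) in HN
    by (rewrite (S_INR (S N)); ring).
  rewrite Rabs_mult, (Rabs_right (INR (S N))) in HN by (apply Rle_ge, pos_INR).
  assert (1 <= INR (S N)) by (apply (le_INR 1); lia).
  nra.
Qed.

Lemma infinite_sum_eventually_const (f : nat -> R) (l c : R) :
  infinite_sum f l -> (forall n, (1 <= n)%nat -> sum_f_R0 f n = c) -> l = c.
Proof.
  intros H Hc. destruct (Req_dec l c) as [|Hn]; auto.
  destruct (H (Rabs (l - c))) as [N HN]; [apply Rabs_pos_lt; lra|].
  specialize (HN (Nat.max N 1) (Nat.le_max_l _ _)).
  rewrite Hc in HN by lia. unfold R_dist in HN. rewrite Rabs_minus_sym in HN. lra.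
Qed.

Lemma bounded_Icc (a b : R) : bounded_set (Icc a b).
Proof.
  exists (Rabs a + Rabs b). intros y [h1 h2].
  unfold Rabs; repeat destruct Rcase_abs; lra.
Qed.

Section RadonIntervals.

Variable m : radon_measure.

(* An empty interval is the countable union of copies of itself, so its
   measure equals an infinite multiple of itself and must vanish. *)
Lemma mu_Icc_empty (a b : R) : b < a -> mu m (Icc a b) = 0.
Proof.
  intros Hba.
  pose proof (mu_sigma_additive m (fun _ => Icc a b) (fun _ => meas_Icc m a b)) as H.
  assert (E : (fun y => exists n : nat, Icc a b y) = Icc a b).
  { apply set_ext; intro y; split; [intros [_ h]; exact h | intro h; exists O; exact h]. }
  cbv beta in H; rewrite E in H. apply infinite_sum_const_self, H.
  - intros n k y _ h. unfold Icc in h. lra.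
  - apply bounded_Icc.
Qed.

Lemma mu_Icc_nonneg (a b : R) : 0 <= mu m (Icc a b).
Proof. apply mu_nonneg; [apply meas_Icc | apply bounded_Icc]. Qed.

(* [a,b] is the disjoint union of [c,d], [a,b] \ [c,d] and empty intervals;
   additivity and nonnegativity give monotonicity. *)
Lemma mu_Icc_mono (a b c d : R) : a <= c -> d <= b -> mu m (Icc c d) <= mu m (Icc a b).
Proof.
  intros Hac Hdb.
  set (Y := fun y => Icc a b y /\ ~ Icc c d y).
  assert (MY : meas m Y).
  { set (B := fun n : nat => match n with O => (fun y => ~ Icc a b y) | _ => Icc c d end).
    assert (EY : Y = fun y => ~ (exists n, B n y)).
    { apply set_ext; intro y; unfold Y, B; split.
      - intros [h1 h2] [[|n] hn]; auto.
      - intro h; split.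
        + apply NNPP; intro h'; apply h; exists O; exact h'.
        + intro h'; apply h; exists 1%nat; exact h'. }
    rewrite EY. apply meas_compl, meas_cunion. intros [|n]; simpl.
    - apply meas_compl, meas_Icc.
    - apply meas_Icc. }
  assert (PY : 0 <= mu m Y).
  { apply mu_nonneg; auto. destruct (bounded_Icc a b) as [r Hr].
    exists r; intros y [hy _]; auto. }
  set (A := fun n : nat => match n with O => Icc c d | 1%nat => Y | _ => Icc 1 0 end).
  assert (EU : (fun y => exists n, A n y) = Icc a b).
  { apply set_ext; intro y; split.
    - intros [[|[|n]] hn]; simpl in hn.
      + unfold Icc in *; lra.
      + destruct hn; auto.
      + unfold Icc in hn; lra.
    - intro h. destruct (classic (Icc c d y)) as [h'|h'].
      + exists O; exact h'.
      + exists 1%nat; split; auto. }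
  assert (Hsum : infinite_sum (fun n => mu m (A n)) (mu m (Icc a b))).
  { rewrite <- EU. apply mu_sigma_additive.
    - intros [|[|n]]; simpl; auto; apply meas_Icc.
    - intros [|[|n]] [|[|k]] y Hnk h1 h2; simpl in *; try congruence;
        unfold Y, Icc in *; try tauto; lra.
    - rewrite EU. apply bounded_Icc. }
  assert (Hsplit : mu m (Icc a b) = mu m (Icc c d) + mu m Y).
  { apply (infinite_sum_eventually_const _ _ _ Hsum).
    intros n Hn. induction n as [|n IH]; [lia|].
    destruct n as [|n]; [simpl; ring|].
    simpl sum_f_R0 in *. rewrite IH by lia. simpl. rewrite (mu_Icc_empty 1 0) by lra. ring. }
  lra.
Qed.

Lemma max_principle (k : R -> R) (K a b : R) :
  a < b -> 0 <= K ->
  (forall c, a <= c <= b -> continuity_pt k c) -> k a = 0 -> k b = 0 ->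
  (forall x t, 0 <= t -> a <= x - t -> x + t <= b ->
     Rabs (k (x + t) - 2 * k x + k (x - t)) <= K * mu m (Icc (x - t) (x + t))) ->
  forall x, a <= x <= b -> k x <= K * mu m (Icc a b).
Proof.
  intros Hab HK Hk ka kb Hdiff x Hx.
  destruct (continuity_ab_maj k a b (Rlt_le _ _ Hab) Hk) as [x0 [Hmax Hx0]].
  apply Rle_trans with (k x0); [apply Hmax; auto|].
  assert (Pmu := mu_Icc_nonneg a b).
  destruct (Rle_dec (k x0) 0) as [Hle|Hpos]; [nra|].
  (* the window centred at x0 whose radius is the distance to the nearer
     endpoint; there k vanishes on one side and is at most k x0 on the other *)
  set (t := Rmin (x0 - a) (b - x0)).
  assert (Ht : 0 <= t /\ a <= x0 - t /\ x0 + t <= b)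
    by (unfold t, Rmin; destruct Rle_dec; lra).
  assert (Hends : k (x0 + t) + k (x0 - t) <= k x0).
  { unfold t, Rmin; destruct Rle_dec.
    - replace (x0 - (x0 - a)) with a by ring. rewrite ka.
      assert (k (x0 + (x0 - a)) <= k x0) by (apply Hmax; lra). lra.
    - replace (x0 + (b - x0)) with b by ring. rewrite kb.
      assert (k (x0 - (b - x0)) <= k x0) by (apply Hmax; lra). lra. }
  assert (Hwin := Hdiff x0 t ltac:(tauto) ltac:(tauto) ltac:(tauto)).
  assert (Hmono : mu m (Icc (x0 - t) (x0 + t)) <= mu m (Icc a b))
    by (apply mu_Icc_mono; tauto).
  assert (k x0 <= Rabs (k (x0 + t) - 2 * k x0 + k (x0 - t))).
  { rewrite <- Rabs_Ropp. eapply Rle_trans; [|apply Rle_abs]. lra. }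
  nra.
Qed.

(* Two-sided version, obtained by applying the principle to k and -k. *)
Lemma max_principle_abs (k : R -> R) (K a b : R) :
  a < b -> 0 <= K ->
  (forall c, a <= c <= b -> continuity_pt k c) -> k a = 0 -> k b = 0 ->
  (forall x t, 0 <= t -> a <= x - t -> x + t <= b ->
     Rabs (k (x + t) - 2 * k x + k (x - t)) <= K * mu m (Icc (x - t) (x + t))) ->
  forall x, a <= x <= b -> Rabs (k x) <= K * mu m (Icc a b).
Proof.
  intros Hab HK Hk ka kb Hdiff x Hx.
  assert (U := max_principle k K a b Hab HK Hk ka kb Hdiff x Hx).
  assert (L : - k x <= K * mu m (Icc a b)).
  { apply (max_principle (fun y => - k y)); auto.
    - intros c Hc. apply continuity_pt_opp; auto.
    - rewrite ka; ring.
    - rewrite kb; ring.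
    - intros y t H0 H1 H2. rewrite <- Rabs_Ropp.
      replace (- (- k (y + t) - 2 * - k y + - k (y - t)))
        with (k (y + t) - 2 * k y + k (y - t)) by ring.
      auto. }
  unfold Rabs; destruct Rcase_abs; lra.
Qed.

End RadonIntervals.

Lemma g_ab_continuous (g : R -> R) (a b : R) : continuity (g_ab g a b).
Proof. intro x; unfold g_ab; reg. Qed.

Lemma g_ab_left (g : R -> R) (a b : R) : a < b -> g_ab g a b a = g a.
Proof. intros; unfold g_ab; field; lra. Qed.

Lemma g_ab_right (g : R -> R) (a b : R) : a < b -> g_ab g a b b = g b.
Proof. intros; unfold g_ab; field; lra. Qed.

Lemma g_ab_second_difference (g : R -> R) (a b x t : R) : a < b ->
  (g (x + t) - g_ab g a b (x + t)) - 2 * (g x - g_ab g a b x)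
    + (g (x - t) - g_ab g a b (x - t))
  = g (x + t) - 2 * g x + g (x - t).
Proof. intros; unfold g_ab; field; lra. Qed.

Lemma second_difference_as_error (g : R -> R) (x t : R) : t <> 0 ->
  g (x + t) - 2 * g x + g (x - t) = -2 * (g x - g_ab g (x - t) (x + t) x).
Proof. intros; unfold g_ab; field; lra. Qed.

Lemma interpolation_error_bound (m : radon_measure) (g : R -> R) (K a b : R) :
  continuity g -> 0 < K -> Lambda_bound m g K -> a < b ->
  forall x, a <= x <= b -> Rabs (g x - g_ab g a b x) <= K * mu m (Icc a b).
Proof.
  intros Hc HK HL Hab.
  apply (max_principle_abs m (fun y => g y - g_ab g a b y)); auto; try lra.
  - intros c _. apply continuity_pt_minus; auto. apply g_ab_continuous.
  - rewrite g_ab_left; auto; ring.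
  - rewrite g_ab_right; auto; ring.
  - intros x t Ht _ _. rewrite g_ab_second_difference; auto.
Qed.

Lemma bound_by_seminorm (m : radon_measure) (g : R -> R) (S A c : R) :
  is_seminorm m g S -> (exists K, 0 < K /\ Lambda_bound m g K) -> 0 <= c ->
  (forall K, 0 < K -> Lambda_bound m g K -> A <= K * c) -> A <= S * c.
Proof.
  intros [_ Hinf] [K0 [HK0 HL0]] Hc HA.
  destruct (Req_dec c 0) as [Z|NZ].
  - specialize (HA K0 HK0 HL0). rewrite Z in HA |- *. lra.
  - assert (Hdiv : A / c <= S).
    { apply Hinf. intros K HK HL. specialize (HA K HK HL).
      apply (Rmult_le_reg_r c); [lra|].
      unfold Rdiv; rewrite Rmult_assoc, Rinv_l by lra. lra. }
    apply (Rmult_le_compat_r c) in Hdiv; [|lra].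
    unfold Rdiv in Hdiv; rewrite Rmult_assoc, Rinv_l in Hdiv by lra. lra.
Qed.

Lemma seminorm_le (m : radon_measure) (g : R -> R) (S B : R) :
  0 <= B -> (forall e, 0 < e -> Lambda_bound m g (B + e)) ->
  is_seminorm m g S -> S <= B.
Proof.
  intros HB HL [Hlow _]. apply Rnot_lt_le; intro HS.
  assert (Hmid := Hlow (B + (S - B) / 2) ltac:(lra) (HL ((S - B) / 2) ltac:(lra))).
  lra.
Qed.

Lemma Lambda_bound_of_error_bound (m : radon_measure) (g : R -> R) (M : R) :
  0 <= M ->
  (forall a b, a < b -> forall x, a <= x <= b ->
     Rabs (g x - g_ab g a b x) <= M * mu m (Icc a b)) ->
  Lambda_bound m g (2 * M).
Proof.
  intros HM Herr x t Ht.
  assert (Pmu := mu_Icc_nonneg m (x - t) (x + t)).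
  destruct (Req_dec t 0) as [Z|NZ].
  - subst t. replace (g (x + 0) - 2 * g x + g (x - 0)) with 0
      by (rewrite Rplus_0_r, Rminus_0_r; ring).
    rewrite Rabs_R0. nra.
  - rewrite second_difference_as_error, Rabs_mult, Rabs_left by lra.
    assert (Hx := Herr (x - t) (x + t) ltac:(lra) x ltac:(lra)). lra.
Qed.

Theorem mainTheorem12 (m : radon_measure) (Hna : nonatomic m) :
  (forall (g : R -> R) (M : R),
      in_Lambda m g -> is_seminorm m g M ->
      forall a b, a < b -> forall x, a <= x <= b ->
        Rabs (g x - g_ab g a b x) <= M * mu m (Icc a b)) /\
  (forall (g : R -> R) (M : R),
      0 <= M -> continuity g ->
      (forall a b, a < b -> forall x, a <= x <= b ->
        Rabs (g x - g_ab g a b x) <= M * mu m (Icc a b)) ->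
      in_Lambda m g /\ (forall S, is_seminorm m g S -> S <= 2 * M)).
Proof.
  split.
  - intros g M [Hc Hadm] Hsn a b Hab x Hx.
    apply (bound_by_seminorm m g); auto using mu_Icc_nonneg.
    intros K HK HL. apply interpolation_error_bound; auto.
  - intros g M HM Hc Herr.
    assert (Hup : forall e, 0 < e -> Lambda_bound m g (2 * M + e)).
    { intros e He x t Ht.
      assert (H2M := Lambda_bound_of_error_bound m g M HM Herr x t Ht).
      assert (Pmu := mu_Icc_nonneg m (x - t) (x + t)). nra. }
    split.
    + split; auto. exists (2 * M + 1). split; [lra | apply Hup; lra].
    + intros S. apply seminorm_le; [lra | exact Hup].
Qed.
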